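(* Fix a slice profile with finite slicing set $\mathcal U=\{u_i\}_{i=1}^m\subset\mathbb S^{d-1}$ and an iteration $t$. Suppose per-example gradients are $\ell_2$-clipped at threshold $C>0$, the minibatch size $B_t\ge1$ is deterministic, $K_t$ is a feasible discrepancy cap at iteration $t$, and the slice-wise Lipschitz condition holds at iteration $t$ with constants $L_{t,i}<\infty$. Then the vector $h_t=(h_{t,i})_{i=1}^m$ with \[ h_{t,i}:=\left(\frac{2K_tL_{t,i}C}{B_t}\right)^2 \] is a valid history-uniform cap (HUC) for $\mathcal U$ at iteration $t$.
   Context: Pufferfish scenario $(\mathcal S,\mathcal Q,\Theta)$: secrets, secret pairs $\mathcal Q\subseteq\mathcal S\times\mathcal S$, priors; each $\theta\in\Theta$ is a joint law of a secret $S$ and a dataset $X=(X_1,\dots,X_n)\in\bar{\mathcal X}^n$. For $\theta$ and $s$ with positive prior mass, $\mu^\theta_s$ is the conditional law of $X$ given $S=s$ under $\theta$; $\Pi(\mu,\nu)$ is the set of couplings. SGD setting: at iteration $t$, subsampling randomness $R_t\sim\mathbb P_{\eta,\rho}$ (independent of data and secret) selects an index (multi)set $\mathsf I_t(R_t)\subseteq[n]$ of size $B_t$. A history $y_{<t}$ contains the current parameter $\xi_{t-1}\in\mathbb R^d$. Per-example gradients $g_t(x_j)=\nabla_\xi\ell(\xi_{t-1};x_j)$ are clipped: $\tilde g_t(x_j)=g_t(x_j)\min\{1,C/\|g_t(x_j)\|_2\}$; $\bar g_t(x;r)=\frac1{B_t}\sum_{j\in\mathsf I_t(r)}\tilde g_t(x_j)$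 (with multiplicity). The pre-noise update is $f_t(x,y_{<t};r)=T_t(\bar g_t(x;r);y_{<t})$ for an update map $T_t:\mathbb R^d\times\mathcal Y_{<t}\to\mathbb R^d$. Discrepancy: $K_t(x,x';r)=\sum_{j\in\mathsf I_t(r)}\mathbf 1\{x_j\ne x'_j\}$. A number $K_t\le B_t$ is a feasible discrepancy cap at iteration $t$ if for all $\theta\in\Theta$, $(s_i,s_j)\in\mathcal Q$ and couplings $\gamma\in\Pi(\mu^\theta_{s_i},\mu^\theta_{s_j})$, $\operatorname{ess\,sup}_{((X,X'),R_t)\sim\gamma\times\mathbb P_{\eta,\rho}}K_t(X,X';R_t)\le K_t$. Slice-wise Lipschitz condition: for each $u_i\in\mathcal U$ there is $L_{t,i}<\infty$ with $|u_i^\top(T_t(z;y_{<t})-T_t(z';y_{<t}))|\le L_{t,i}|u_i^\top(z-z')|$ for all $z,z'\in\mathbb R^d$ and all histories $y_{<t}$ in the support. HUC: $h_t\in\mathbb R^m_+$ is a HUC for $\mathcal U$ at iteration $t$ if for all $\theta\in\Theta$, $(s_i,s_j)\in\mathcal Q$, histories $y_{<t}$ in the support and every coupling $\gamma\in\Pi(\mu^\theta_{s_i},\mu^\theta_{s_j})$, $\gamma\times\mathbb P_{\eta,\rho}$-almost surely in $((X,X'),R_t)$, $|\langle f_t(X,y_{<t};R_t)-f_t(X',y_{<t};R_t),u_i\rangle|\le\sqrt{h_{t,i}}$ for all $i\in[m]$. *)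

From HB Require Import structures.
From mathcomp Require Import all_boot all_order all_algebra.
From mathcomp Require Import all_classical all_reals all_analysis ess_sup_inf.
Set Implicit Arguments. Unset Strict Implicit. Unset Printing Implicit Defensive.
Import Order.TTheory GRing.Theory Num.Theory.
Import numFieldNormedType.Exports.
Local Open Scope classical_set_scope.
Local Open Scope ring_scope.

Section Defs.
Variable R : realType.

Definition dotv (d : nat) (u v : 'rV[R]_d) : R := \sum_(k < d) u 0 k * v 0 k.
Definition l2norm (d : nat) (v : 'rV[R]_d) : R := Num.sqrt (dotv v v).

Definition clip (d : nat) (C : R) (g : 'rV[R]_d) : 'rV[R]_d :=
  Num.min 1 (C / l2norm g) *: g.

(* Pufferfish: theta is a joint law of (secret, dataset). *)
Definition prior_mass dS (S : measurableType dS) dD (D : measurableType dD)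
  (theta : probability (S * D)%type R) (s : S) : \bar R := theta ([set s] `*` setT).

Definition has_pos_mass dS (S : measurableType dS) dD (D : measurableType dD)
  (theta : probability (S * D)%type R) (s : S) : Prop := (0 < prior_mass theta s)%E.

Definition cond_law dS (S : measurableType dS) dD (D : measurableType dD)
  (theta : probability (S * D)%type R) (s : S) (A : set D) : \bar R :=
  (fine (theta ([set s] `*` A)) / fine (prior_mass theta s))%:E.

Definition is_coupling dD (D : measurableType dD)
  (mu nu : set D -> \bar R) (gamma : probability (D * D)%type R) : Prop :=
  forall A : set D, measurable A ->
    gamma (A `*` setT) = mu A /\ gamma (setT `*` A) = nu A.

Definition gbar (Xb : Type) (n d : nat) (C : R) (B : nat)
  (g : Xb -> 'rV[R]_d) (I : seq 'I_n) (x : 'I_n -> Xb) : 'rV[R]_d :=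
  (B%:R)^-1 *: \sum_(j <- I) clip C (g (x j)).

Definition discrepancy (Xb : Type) (n : nat) (I : seq 'I_n) (x x' : 'I_n -> Xb) : nat :=
  \sum_(j <- I) (if `[< x j <> x' j >] then 1 else 0)%N.

End Defs.

From HB Require Import structures.
From mathcomp Require Import all_boot all_order all_algebra.
From mathcomp Require Import all_classical all_reals all_analysis ess_sup_inf.
From mathcomp Require Import ring lra.
Set Implicit Arguments. Unset Strict Implicit. Unset Printing Implicit Defensive.
Import Order.TTheory GRing.Theory Num.Theory.
Import numFieldNormedType.Exports.
Local Open Scope classical_set_scope.
Local Open Scope ring_scope.

(* Each example on which the coupled datasets differ moves the clipped average
   by at most 2C/B along a unit direction, since clipped gradients lie in the
   ball of radius C; the other examples cancel.  Almost surely at most K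
   examples of the minibatch differ, so the pre-update slices differ by at most
   2KC/B, and the slice-wise Lipschitz bound multiplies this by L_i. *)

Section DotProduct.
Variables (R : realType) (d : nat).
Implicit Types u v w : 'rV[R]_d.

Lemma dotvC u v : dotv u v = dotv v u.
Proof. by apply: eq_bigr => k _; rewrite mulrC. Qed.

Lemma dotv0 u : dotv u 0 = 0.
Proof. by rewrite /dotv big1 // => k _; rewrite mxE mulr0. Qed.

Lemma dotvD u v w : dotv u (v + w) = dotv u v + dotv u w.
Proof. by rewrite /dotv -big_split; apply: eq_bigr => k _; rewrite mxE mulrDr. Qed.

Lemma dotvN u v : dotv u (- v) = - dotv u v.
Proof. by rewrite /dotv -sumrN; apply: eq_bigr => k _; rewrite mxE mulrN. Qed.

Lemma dotvB u v w : dotv u (v - w) = dotv u v - dotv u w.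
Proof. by rewrite dotvD dotvN. Qed.

Lemma dotvZ u c v : dotv u (c *: v) = c * dotv u v.
Proof. by rewrite /dotv mulr_sumr; apply: eq_bigr => k _; rewrite mxE mulrCA. Qed.

Lemma dotv_sum (I : Type) u (s : seq I) (F : I -> 'rV[R]_d) :
  dotv u (\sum_(j <- s) F j) = \sum_(j <- s) dotv u (F j).
Proof. exact: (big_morph _ (dotvD u) (dotv0 u)). Qed.

Lemma dotv_ge0 v : 0 <= dotv v v.
Proof. by rewrite sumr_ge0 // => k _; rewrite -expr2 sqr_ge0. Qed.

Lemma dotv_l2norm v : dotv v v = l2norm v ^+ 2.
Proof. by rewrite sqr_sqrtr // dotv_ge0. Qed.

Lemma l2norm_ge0 v : 0 <= l2norm v.
Proof. exact: sqrtr_ge0. Qed.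

(* Expand 0 <= |C s u - w|^2 for both signs s = 1, -1. *)
Lemma normr_dotv_unit_le u w (C : R) :
  0 < C -> l2norm u = 1 -> dotv w w <= C ^+ 2 -> `|dotv u w| <= C.
Proof.
move=> C_gt0 u1 ww_le.
have uu : dotv u u = 1 by rewrite dotv_l2norm u1 expr1n.
have sq_ge0 (s : R) : s ^+ 2 = 1 -> 0 <= C ^+ 2 - 2 * C * s * dotv u w + dotv w w.
  move=> s2; have := dotv_ge0 (C *: (s *: u) - w).
  rewrite dotvB !dotvZ (dotvC (_ - _) u) (dotvC (_ - _) w) !dotvB !dotvZ uu.
  by rewrite (dotvC w u); nra.
have := sq_ge0 1 (expr1n _ _); have := sq_ge0 (-1) (etrans (sqrrN _) (expr1n _ _)).
by rewrite ler_norml => *; apply/andP; split; nra.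
Qed.

Lemma dotv_clip_le (C : R) (g : 'rV[R]_d) :
  0 <= C -> dotv (clip C g) (clip C g) <= C ^+ 2.
Proof.
move=> C_ge0; rewrite /clip !dotvZ (dotvC _ g) dotvZ dotv_l2norm.
set N := l2norm g; set c := Num.min 1 (C / N).
have N_ge0 : 0 <= N := l2norm_ge0 g.
have c_ge0 : 0 <= c by rewrite le_min ler01 divr_ge0.
have cN_le : c * N <= C.
  have [->|N_neq0] := eqVneq N 0; first by rewrite mulr0.
  have c_le : c <= C / N by rewrite ge_min lexx orbT.
  by apply: le_trans (ler_wpM2r N_ge0 c_le) _; rewrite divfK.
have : 0 <= c * N by rewrite mulr_ge0.
by nra.
Qed.

End DotProduct.

Lemma normr_dotv_clipB_le (R : realType) d (C : R) (u g g' : 'rV[R]_d) :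
  0 < C -> l2norm u = 1 -> `|dotv u (clip C g - clip C g')| <= 2 * C.
Proof.
move=> C_gt0 u1; rewrite dotvB mulr2n mulrDl mul1r.
by apply: le_trans (ler_normB _ _) _; apply: lerD;
  apply: normr_dotv_unit_le => //; apply: dotv_clip_le; apply: ltW.
Qed.

(* No positivity of [B] is needed: for [B = 0] both sides vanish since [0^-1 = 0]. *)
Lemma normr_dotv_gbarB_le (R : realType) (Xb : Type) n d (C : R) (B : nat)
    (g : Xb -> 'rV[R]_d) (I : seq 'I_n) (x x' : 'I_n -> Xb) (u : 'rV[R]_d) :
  0 < C -> l2norm u = 1 ->
  `|dotv u (gbar C B g I x - gbar C B g I x')|
    <= 2 * C * (discrepancy I x x')%:R / B%:R.
Proof.
move=> C_gt0 u1; rewrite /gbar -scalerBr dotvZ -sumrB dotv_sum normrM.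
rewrite ger0_norm ?invr_ge0 // mulrC ler_wpM2r ?invr_ge0 //.
apply: le_trans (ler_norm_sum _ _ _) _.
rewrite /discrepancy natr_sum mulr_sumr; apply: ler_sum => j _.
case: asboolP => [_|/contrapT ->]; last by rewrite subrr dotv0 normr0 mulr0.
by rewrite mulr1; apply: normr_dotv_clipB_le.
Qed.

Lemma mulr_le_normr_mul (R : realDomainType) (L x e : R) :
  0 <= x -> x <= e -> L * x <= `|L * e|.
Proof.
move=> x_ge0 xe; have [L_ge0|L_lt0] := leP 0 L.
  exact: le_trans (ler_wpM2l L_ge0 xe) (ler_norm _).
by apply: le_trans (normr_ge0 _); rewrite mulr_le0_ge0 // ltW.
Qed.

Theorem proposition2
  (R : realType)
  (* secrets, with measurable singletons so that prior masses make sense *)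
  (dS : measure_display) (S : measurableType dS)
  (hS : forall s : S, measurable [set s])
  (* dataset space: a measurable space of datasets X = (X_1, ..., X_n) *)
  (Xb : Type) (n : nat)
  (dD : measure_display) (D : measurableType dD) (coord : D -> 'I_n -> Xb)
  (* Pufferfish scenario: secret pairs Q and set of priors Theta *)
  (Q : set (S * S)) (Theta : set (probability (S * D)%type R))
  (* subsampling randomness R_t ~ P_{eta,rho}, index multiset I_t(r) of size B_t *)
  (dR : measure_display) (Rsp : measurableType dR) (P : probability Rsp R)
  (B : nat) (idx : Rsp -> seq 'I_n)
  (hB : (1 <= B)%N) (hidx : forall r, size (idx r) = B)
  (* histories, their support, current parameter xi_{t-1}, update map T_t *)
  (d : nat) (Y : Type) (supp : set Y) (xi : Y -> 'rV[R]_d)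
  (T : 'rV[R]_d -> Y -> 'rV[R]_d)
  (* per-example gradient map grad xi x = nabla_xi l(xi; x) *)
  (grad : 'rV[R]_d -> Xb -> 'rV[R]_d)
  (C : R) (hC : 0 < C)
  (* slicing set U = {u_i} in the unit sphere *)
  (m : nat) (u : 'I_m -> 'rV[R]_d) (hu : forall i, l2norm (u i) = 1)
  (* feasible discrepancy cap K_t *)
  (K : R)
  (hKB : K <= B%:R)
  (hK : forall theta, Theta theta -> forall si sj, Q (si, sj) ->
     has_pos_mass theta si -> has_pos_mass theta sj ->
     forall gamma : probability (D * D)%type R,
       is_coupling (cond_law theta si) (cond_law theta sj) gamma ->
       (ess_sup (gamma \x P)%E
          (fun z => ((discrepancy (idx z.2) (coord z.1.1) (coord z.1.2))%:R)%:E)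
        <= K%:E)%E)
  (* slice-wise Lipschitz condition *)
  (L : 'I_m -> R)
  (hL : forall i (z z' : 'rV[R]_d) (y : Y), supp y ->
     `|dotv (u i) (T z y - T z' y)| <= L i * `|dotv (u i) (z - z')|) :
  (* conclusion: h_{t,i} = (2 K L_i C / B)^2 is a HUC for U *)
  let h := fun i : 'I_m => (2 * K * L i * C / B%:R) ^+ 2 in
  (forall i, 0 <= h i) /\
  forall theta, Theta theta -> forall si sj, Q (si, sj) ->
    has_pos_mass theta si -> has_pos_mass theta sj ->
    forall y : Y, supp y ->
    forall gamma : probability (D * D)%type R,
      is_coupling (cond_law theta si) (cond_law theta sj) gamma ->
      \forall z \ae (gamma \x P)%E, forall i : 'I_m,
        `|dotv (T (gbar C B (grad (xi y)) (idx z.2) (coord z.1.1)) y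
                - T (gbar C B (grad (xi y)) (idx z.2) (coord z.1.2)) y) (u i)|
          <= Num.sqrt (h i).
Proof.
move=> h; split=> [i|theta thetaP si sj sQ si_pos sj_pos y y_supp gamma coupling].
  exact: sqr_ge0.
have /ess_supP := hK _ thetaP _ _ sQ si_pos sj_pos _ coupling.
apply: filterS => z; rewrite lee_fin => discr_le i.
set g := gbar C B (grad (xi y)) (idx z.2).
have gbar_slice_le : `|dotv (u i) (g (coord z.1.1) - g (coord z.1.2))|
    <= 2 * C * K / B%:R.
  apply: le_trans (normr_dotv_gbarB_le _ _ _ _ _ hC (hu i)) _.
  by rewrite ler_wpM2r ?invr_ge0 // ler_wpM2l // mulr_ge0 // ltW.
rewrite /h sqrtr_sqr dotvC; apply: le_trans (hL i _ _ _ y_supp) _.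
have -> : 2 * K * L i * C / B%:R = L i * (2 * C * K / B%:R) by ring.
exact: mulr_le_normr_mul gbar_slice_le.
Qed.
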